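(* Let $G$ be a hereditarily normal topological group that contains a non-trivial convergent sequence. Then $G$ has a $G_\delta$-diagonal.
   Context: All spaces are assumed to be $T_1$. A space $X$ has a $G_\delta$-diagonal if $\{\langle x,x\rangle : x\in X\}$ is the intersection of a countable family of open subsets of $X\times X$. A non-trivial convergent sequence is a subspace homeomorphic to the subspace $\{0\}\cup\{1/n : n=1,2,3,\dots\}$ of the real line. *)

From Stdlib Require Import Reals.
Open Scope R_scope.

Definition is_topology {X : Type} (op : (X -> Prop) -> Prop) : Prop :=
  op (fun _ => True) /\
  (forall U V, op U -> op V -> op (fun x => U x /\ V x)) /\
  (forall (I : Type) (F : I -> X -> Prop),
      (forall i, op (F i)) -> op (fun x => exists i, F i x)).

Definition T1_space {X : Type} (op : (X -> Prop) -> Prop) : Prop :=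
  forall x y : X, x <> y -> exists U, op U /\ U x /\ ~ U y.

Definition closed_set {X : Type} (op : (X -> Prop) -> Prop) (A : X -> Prop) : Prop :=
  op (fun x => ~ A x).

(* Normal: disjoint closed sets are separated by disjoint open sets
   (T1 is a standing assumption, inherited by subspaces). *)
Definition normal_space {X : Type} (op : (X -> Prop) -> Prop) : Prop :=
  forall A B : X -> Prop, closed_set op A -> closed_set op B ->
    (forall x, A x -> B x -> False) ->
    exists U V : X -> Prop, op U /\ op V /\
      (forall x, A x -> U x) /\ (forall x, B x -> V x) /\
      (forall x, U x -> V x -> False).

Definition subspace_top {X : Type} (op : (X -> Prop) -> Prop) (S : X -> Prop)
  : ({x : X | S x} -> Prop) -> Prop :=
  fun V => exists U, op U /\ forall y : {x : X | S x}, V y <-> U (proj1_sig y).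

Definition hereditarily_normal {X : Type} (op : (X -> Prop) -> Prop) : Prop :=
  forall S : X -> Prop, normal_space (subspace_top op S).

Definition prod_top {X Y : Type} (opX : (X -> Prop) -> Prop) (opY : (Y -> Prop) -> Prop)
  : (X * Y -> Prop) -> Prop :=
  fun W => forall p, W p -> exists A B, opX A /\ opY B /\ A (fst p) /\ B (snd p) /\
             (forall q, A (fst q) -> B (snd q) -> W q).

Definition continuous {X Y : Type} (opX : (X -> Prop) -> Prop) (opY : (Y -> Prop) -> Prop)
  (f : X -> Y) : Prop :=
  forall V, opY V -> opX (fun x => V (f x)).

Definition embedding {X Y : Type} (opX : (X -> Prop) -> Prop) (opY : (Y -> Prop) -> Prop)
  (f : X -> Y) : Prop :=
  (forall x x', f x = f x' -> x = x') /\ continuous opX opY f /\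
  (forall V, opX V -> exists U, opY U /\ forall x, V x <-> U (f x)).

Definition is_group {G : Type} (mul : G -> G -> G) (inv : G -> G) (e : G) : Prop :=
  (forall x y z, mul x (mul y z) = mul (mul x y) z) /\
  (forall x, mul e x = x) /\ (forall x, mul x e = x) /\
  (forall x, mul (inv x) x = e) /\ (forall x, mul x (inv x) = e).

(* Topological group (T1 is a standing assumption of the paper). *)
Definition is_topological_group {G : Type} (op : (G -> Prop) -> Prop)
  (mul : G -> G -> G) (inv : G -> G) (e : G) : Prop :=
  is_topology op /\ T1_space op /\ is_group mul inv e /\
  continuous (prod_top op op) op (fun p => mul (fst p) (snd p)) /\
  continuous op op inv.

Definition R_open (U : R -> Prop) : Prop :=
  forall x, U x -> exists eps, 0 < eps /\ forall y, Rabs (y - x) < eps -> U y.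

Definition conv_seq_set (x : R) : Prop :=
  x = 0 \/ exists n : nat, x = / INR (S n).

Definition conv_seq_space : Type := {x : R | conv_seq_set x}.

Definition conv_seq_top : (conv_seq_space -> Prop) -> Prop :=
  subspace_top R_open conv_seq_set.

(* X contains a subspace homeomorphic to {0} ∪ {1/n}. *)
Definition has_nontrivial_convergent_sequence {X : Type} (op : (X -> Prop) -> Prop) : Prop :=
  exists f : conv_seq_space -> X, embedding conv_seq_top op f.

Definition has_G_delta_diagonal {X : Type} (op : (X -> Prop) -> Prop) : Prop :=
  exists U : nat -> X * X -> Prop,
    (forall n, prod_top op op (U n)) /\
    (forall p : X * X, fst p = snd p <-> forall n, U n p).

(* Translating the sequence, we get an injective sequence
   y_n -> e with y_n <> e.  Its even and odd parts D0, D1 have ranges that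
   are closed in the punctured group Z = G \ {e} (a sequence converging to e
   can be separated from every other point, G being Hausdorff).  By normality
   of Z we separate D0 and D1 by open sets O0, O1 disjoint on Z.  For a
   sequence d -> e inside an open set O, normality of Z again yields open
   sets W_k = U_{m >= k} P d_m^-1 containing e whose intersection lies in
   O \/ {e}.  Intersecting the families obtained for O0 and O1 shows that
   {e} is a G_delta-set, and in a topological group this is equivalent to
   the diagonal being a G_delta (use (a, b) |-> a^-1 b). *)

From Pilot Require Import Defs.
From Stdlib Require Import Reals Lra Lia Classical FunctionalExtensionality PropExtensionality.
Open Scope R_scope.

Section Topology.

Variable X : Type.
Variable op : (X -> Prop) -> Prop.
Hypothesis Ht : is_topology op.

Lemma open_ext (U V : X -> Prop) : op U -> (forall x, U x <-> V x) -> op V.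
Proof.
  intros HU E. replace V with U; auto.
  apply functional_extensionality; intro x; apply propositional_extensionality; auto.
Qed.

Lemma open_inter (U V : X -> Prop) : op U -> op V -> op (fun x => U x /\ V x).
Proof. destruct Ht as [_ [Hi _]]. auto. Qed.

Lemma open_of_local (U : X -> Prop) :
  (forall x, U x -> exists V, op V /\ V x /\ forall y, V y -> U y) -> op U.
Proof.
  intros H. destruct Ht as [_ [_ Hu]].
  pose (I := {V : X -> Prop | op V /\ forall y, V y -> U y}).
  apply (open_ext _ _ (Hu I (fun i => proj1_sig i) (fun i => proj1 (proj2_sig i)))).
  intro x; split.
  - intros [[V [HV HVU]] Hx]; auto.
  - intros Hx. destruct (H x Hx) as [V [HV [HVx HVU]]].
    exists (exist _ V (conj HV HVU)); simpl; auto.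
Qed.

Lemma open_union_nat (P : nat -> Prop) (F : nat -> X -> Prop) :
  (forall m, op (F m)) -> op (fun x => exists m, P m /\ F m x).
Proof.
  intros H. apply open_of_local. intros x [m [Pm Fx]].
  exists (F m); repeat split; auto. intros y Hy; exists m; auto.
Qed.

Hypothesis T1 : T1_space op.

Lemma open_complement_point (a : X) : op (fun x => x <> a).
Proof.
  apply open_of_local. intros x Hx.
  destruct (T1 x a Hx) as [U [HU [Ux Ua]]].
  exists U; repeat split; auto. intros y Hy E; subst; auto.
Qed.

Lemma avoid_initial_segment (z : nat -> X) (g : X) :
  (forall n, g <> z n) ->
  forall N, exists V, op V /\ V g /\ forall n, (n < N)%nat -> ~ V (z n).
Proof.
  intros Hg N. induction N as [|N [V [HV [Vg HVn]]]].
  - exists (fun _ => True). destruct Ht as [H0 _]. repeat split; auto. intros; lia.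
  - destruct (T1 g (z N) (Hg N)) as [U [HU [Ug Uz]]].
    exists (fun x => V x /\ U x). split; [apply open_inter; auto | split; auto].
    intros n Hn [H1 H2]. destruct (Nat.eq_dec n N) as [->|Hne]; auto.
    apply (HVn n); auto; lia.
Qed.

End Topology.

Definition converges_to {X : Type} (op : (X -> Prop) -> Prop) (z : nat -> X) (a : X) : Prop :=
  forall V, op V -> V a -> exists N, forall n, (N <= n)%nat -> V (z n).

Lemma converges_subsequence {X : Type} (op : (X -> Prop) -> Prop) (z : nat -> X) a
  (s : nat -> nat) : (forall n, (n <= s n)%nat) ->
  converges_to op z a -> converges_to op (fun n => z (s n)) a.
Proof.
  intros Hs Hz V HV Va. destruct (Hz V HV Va) as [N HN].
  exists N. intros n Hn. apply HN. specialize (Hs n). lia.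
Qed.

Lemma continuous_converges {X Y : Type} (opX : (X -> Prop) -> Prop)
  (opY : (Y -> Prop) -> Prop) (f : X -> Y) (z : nat -> X) a :
  continuous opX opY f -> converges_to opX z a -> converges_to opY (fun n => f (z n)) (f a).
Proof. intros Hf Hz V HV Va. exact (Hz _ (Hf V HV) Va). Qed.

Section TopologicalGroup.

Variable G : Type.
Variable op : (G -> Prop) -> Prop.
Variables (mul : G -> G -> G) (inv : G -> G) (e : G).
Hypothesis TG : is_topological_group op mul inv e.

Lemma tg_topology : is_topology op.
Proof. apply TG. Qed.

Lemma tg_T1 : T1_space op.
Proof. apply TG. Qed.

Lemma tg_group : is_group mul inv e.
Proof. apply TG. Qed.

Lemma open_right_translate c V : op V -> op (fun h => V (mul h c)).
Proof.
  destruct TG as (Ht & _ & _ & Hm & _). intros HV. apply open_of_local; auto.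
  intros h Hh. destruct (Hm V HV (h, c) Hh) as [A [B [HA [_ [Ah [Bc Hq]]]]]].
  exists A; repeat split; auto. intros y Hy. exact (Hq (y, c) Hy Bc).
Qed.

Lemma open_left_translate c V : op V -> op (fun h => V (mul c h)).
Proof.
  destruct TG as (Ht & _ & _ & Hm & _). intros HV. apply open_of_local; auto.
  intros h Hh. destruct (Hm V HV (c, h) Hh) as [A [B [_ [HB [Ac [Bh Hq]]]]]].
  exists B; repeat split; auto. intros y Hy. exact (Hq (c, y) Ac Hy).
Qed.

Lemma separate_from_identity g : g <> e ->
  exists A B, op A /\ op B /\ A g /\ B e /\ forall x, A x -> B x -> False.
Proof.
  destruct TG as (_ & T1 & (Ga & Gl & _ & Gil & Gir) & Hm & Hi). intros Hg.
  destruct (T1 e g (fun E => Hg (eq_sym E))) as [U [HU [Ue Ug]]].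
  assert (Uee : U (mul e e)) by (rewrite Gl; exact Ue).
  destruct (Hm U HU (e, e) Uee) as [A [B [HA [HB [Ae [Be Hq]]]]]].
  (* x in A and x^-1 g in B would give g = x (x^-1 g) in U. *)
  exists (fun h => B (mul (inv h) g)), A. repeat split; auto.
  - exact (Hi _ (open_right_translate g B HB)).
  - simpl. rewrite Gil. exact Be.
  - intros x Hx1 Hx2. apply Ug. specialize (Hq (x, mul (inv x) g) Hx2 Hx1).
    simpl in Hq. rewrite Ga, Gir, Gl in Hq. exact Hq.
Qed.

Lemma avoid_sequence (z : nat -> G) g :
  converges_to op z e -> g <> e -> (forall n, g <> z n) ->
  exists V, op V /\ V g /\ forall n, ~ V (z n).
Proof.
  intros Hz Hg Hgz.
  destruct (separate_from_identity g Hg) as [A [B [HA [HB [Ag [Be HAB]]]]]].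
  destruct (Hz B HB Be) as [N HN].
  destruct (avoid_initial_segment G op tg_topology tg_T1 z g Hgz N)
    as [V [HV [Vg HVn]]].
  exists (fun x => A x /\ V x). split; [apply open_inter; auto; apply tg_topology|].
  split; auto. intros n [H1 H2]. destruct (Nat.lt_ge_cases n N) as [Hl|Hl].
  - exact (HVn n Hl H2).
  - exact (HAB _ H1 (HN n Hl)).
Qed.

Definition punctured := {x : G | x <> e}.
Definition punctured_top : (punctured -> Prop) -> Prop := subspace_top op (fun x => x <> e).

Lemma sequence_range_closed (z : nat -> G) :
  converges_to op z e ->
  Defs.closed_set punctured_top (fun y : punctured => exists n, proj1_sig y = z n).
Proof.
  intros Hz. exists (fun g => exists V, op V /\ V g /\ forall n, ~ V (z n)). split.
  - apply open_of_local; [apply tg_topology|]. intros g [V [HV [Vg Hn]]].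
    exists V; repeat split; auto. intros y Hy. exists V; auto.
  - intros [g Hg]; simpl. split.
    + intros Hnd. apply (avoid_sequence z g Hz Hg). intros n E. apply Hnd; eauto.
    + intros [V [_ [Vg Hn]]] [n E]. rewrite E in Vg. exact (Hn n Vg).
Qed.

Hypothesis punctured_normal : normal_space punctured_top.

Lemma G_delta_around_sequence (d : nat -> G) (O : G -> Prop) :
  converges_to op d e -> (forall n, d n <> e) -> op O -> (forall n, O (d n)) ->
  exists W : nat -> G -> Prop, (forall k, op (W k)) /\ (forall k, W k e) /\
    forall g, g <> e -> ~ O g -> exists k, ~ W k g.
Proof.
  intros Hd Hne HO HOd. pose proof tg_group as (_ & Gl & Gr & _ & _).
  assert (HC : Defs.closed_set punctured_top (fun y : punctured => ~ O (proj1_sig y))).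
  { exists O. split; auto. intros y. split; [apply NNPP | auto]. }
  (* Separate the range of d from the complement of O inside G \ {e}. *)
  destruct (punctured_normal _ _ (sequence_range_closed d Hd) HC)
    as [P [Q [[P' [HP' EP]] [[Q' [HQ' EQ]] [HDP [HCQ HPQ]]]]]].
  { intros y [n E] Hy. apply Hy. rewrite E. auto. }
  exists (fun k h => exists m, (k <= m)%nat /\ P' (mul h (d m))). split; [|split].
  - intros k. apply open_union_nat; [apply tg_topology|].
    intros m. exact (open_right_translate (d m) P' HP').
  - intros k. exists k. split; auto. rewrite Gl.
    apply (EP (exist _ (d k) (Hne k))). apply HDP. exists k; auto.
  - (* g lies in Q', and g d_m -> g eventually stays in Q' \ {e}, away from P'. *)
    intros g Hg HOg.
    assert (Qg : Q' g) by (apply (EQ (exist _ g Hg)); apply HCQ; simpl; auto).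
    assert (HV : op (fun h => Q' (mul g h) /\ mul g h <> e)).
    { apply open_inter; [apply tg_topology | apply open_left_translate; auto |].
      apply (open_left_translate g (fun x => x <> e)).
      apply open_complement_point; [apply tg_topology | apply tg_T1]. }
    assert (Ve : Q' (mul g e) /\ mul g e <> e) by (rewrite Gr; auto).
    destruct (Hd _ HV Ve) as [k Hk]. exists k. intros [m [Hkm HPm]].
    destruct (Hk m Hkm) as [HQm Hnem].
    apply (HPQ (exist _ (mul g (d m)) Hnem)).
    + apply (EP (exist _ (mul g (d m)) Hnem)). exact HPm.
    + apply (EQ (exist _ (mul g (d m)) Hnem)). exact HQm.
Qed.

Lemma identity_G_delta (d0 d1 : nat -> G) :
  converges_to op d0 e -> converges_to op d1 e ->
  (forall n, d0 n <> e) -> (forall n, d1 n <> e) -> (forall n m, d0 n <> d1 m) ->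
  exists W : nat -> G -> Prop, (forall k, op (W k)) /\
    forall g, g = e <-> forall k, W k g.
Proof.
  intros Hc0 Hc1 Hne0 Hne1 Hdisj.
  destruct (punctured_normal _ _ (sequence_range_closed d0 Hc0) (sequence_range_closed d1 Hc1))
    as [U0 [U1 [[O0 [HO0 E0]] [[O1 [HO1 E1]] [HD0 [HD1 H01]]]]]].
  { intros z [n En] [m Em]. apply (Hdisj n m). rewrite <- En, <- Em. reflexivity. }
  assert (O0d : forall n, O0 (d0 n)).
  { intros n. apply (E0 (exist (fun x => x <> e) _ (Hne0 n))). apply HD0. exists n; reflexivity. }
  assert (O1d : forall n, O1 (d1 n)).
  { intros n. apply (E1 (exist (fun x => x <> e) _ (Hne1 n))). apply HD1. exists n; reflexivity. }
  destruct (G_delta_around_sequence d0 O0 Hc0 Hne0 HO0 O0d) as [W0 [HW0 [W0e W0g]]].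
  destruct (G_delta_around_sequence d1 O1 Hc1 Hne1 HO1 O1d) as [W1 [HW1 [W1e W1g]]].
  exists (fun k h => W0 k h /\ W1 k h). split.
  - intros k. apply open_inter; auto. apply tg_topology.
  - intros g. split; [intros ->; auto|].
    (* A point g <> e misses O0 or O1, hence some W0 k or some W1 k. *)
    intros Hg. apply NNPP. intros Hne.
    destruct (classic (O0 g)) as [H0|H0].
    + assert (H1 : ~ O1 g).
      { intros H1. apply (H01 (exist _ g Hne)); [apply E0 | apply E1]; auto. }
      destruct (W1g g Hne H1) as [k Hk]. apply Hk, Hg.
    + destruct (W0g g Hne H0) as [k Hk]. apply Hk, Hg.
Qed.

End TopologicalGroup.

(* In a topological group, a G_delta identity gives a G_delta diagonal,
   via the continuous map (a, b) |-> a^-1 b. *)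
Lemma diagonal_of_identity_G_delta {G : Type} (op : (G -> Prop) -> Prop) mul inv (e : G) :
  is_topological_group op mul inv e ->
  (exists W : nat -> G -> Prop, (forall k, op (W k)) /\ forall g, g = e <-> forall k, W k g) ->
  has_G_delta_diagonal op.
Proof.
  intros (_ & _ & (Ga & Gl & Gr & Gil & Gir) & Hm & Hi) [W [HW We]].
  exists (fun k q => W k (mul (inv (fst q)) (snd q))). split.
  - intros k q Hq.
    destruct (Hm (W k) (HW k) (inv (fst q), snd q) Hq) as [A [B [HA [HB [Aq [Bq Hbox]]]]]].
    exists (fun a => A (inv a)), B. repeat split; auto.
    intros r Ha Hb. exact (Hbox (inv (fst r), snd r) Ha Hb).
  - intros [a b]; simpl. rewrite <- We. split.
    + intros ->. apply Gil.
    + intros E. rewrite <- (Gl b), <- (Gir a), <- Ga, E, Gr. reflexivity.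
Qed.

Definition conv_seq_limit : conv_seq_space := exist _ 0 (or_introl eq_refl).
Definition conv_seq_term (n : nat) : conv_seq_space :=
  exist _ (/ INR (S n)) (or_intror (ex_intro _ n eq_refl)).

Lemma INR_S_pos n : 0 < INR (S n).
Proof. apply lt_0_INR; lia. Qed.

Lemma conv_seq_term_converges : converges_to conv_seq_top conv_seq_term conv_seq_limit.
Proof.
  intros V [U [HU EU]] V0. apply EU in V0.
  destruct (HU 0 V0) as [eps [Heps Hball]].
  destruct (INR_unbounded (/ eps)) as [N HN]. exists N. intros n Hn.
  apply EU, Hball. change (Rabs (/ INR (S n) - 0) < eps).
  assert (INR N <= INR (S n)) by (apply le_INR; lia).
  pose proof (Rinv_0_lt_compat eps Heps). pose proof (INR_S_pos n).
  pose proof (Rinv_0_lt_compat _ (INR_S_pos n)).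
  rewrite Rminus_0_r, Rabs_right by lra.
  rewrite <- (Rinv_inv eps). apply Rinv_0_lt_contravar; lra.
Qed.

Lemma conv_seq_term_inj n m : conv_seq_term n = conv_seq_term m -> n = m.
Proof.
  intros E. apply (f_equal (@proj1_sig _ _)) in E.
  change (/ INR (S n) = / INR (S m)) in E.
  apply Rinv_eq_reg, INR_eq in E. lia.
Qed.

Lemma conv_seq_term_neq_limit n : conv_seq_term n <> conv_seq_limit.
Proof.
  intros E. apply (f_equal (@proj1_sig _ _)) in E.
  change (/ INR (S n) = 0) in E. pose proof (INR_S_pos n). apply (Rinv_neq_0_compat (INR (S n))); lra.
Qed.

Lemma sequence_at_identity {G : Type} (op : (G -> Prop) -> Prop) mul inv (e : G) :
  is_topological_group op mul inv e -> has_nontrivial_convergent_sequence op ->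
  exists y : nat -> G, converges_to op y e /\ (forall n, y n <> e) /\
    forall n m, y n = y m -> n = m.
Proof.
  intros TG [f [finj [fcont _]]].
  pose proof TG as (_ & _ & (Ga & Gl & Gr & Gil & Gir) & _ & _).
  set (p := f conv_seq_limit).
  exists (fun n => mul (inv p) (f (conv_seq_term n))).
  assert (Hp : forall n, mul p (mul (inv p) (f (conv_seq_term n))) = f (conv_seq_term n)).
  { intros n. rewrite Ga, Gir, Gl. reflexivity. }
  repeat split.
  - intros W HW We.
    apply (continuous_converges _ _ f _ _ fcont conv_seq_term_converges
             (fun h => W (mul (inv p) h))).
    + exact (open_left_translate G op mul inv e TG (inv p) W HW).
    + fold p. rewrite Gil. exact We.
  - intros n E. apply (conv_seq_term_neq_limit n), finj. fold p.
    rewrite <- (Hp n), E, Gr. reflexivity.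
  - intros n m E. apply conv_seq_term_inj, finj. rewrite <- (Hp n), <- (Hp m), E. reflexivity.
Qed.

Theorem theorem2p3 (G : Type) (op : (G -> Prop) -> Prop)
  (mul : G -> G -> G) (inv : G -> G) (e : G) :
  is_topological_group op mul inv e ->
  hereditarily_normal op ->
  has_nontrivial_convergent_sequence op ->
  has_G_delta_diagonal op.
Proof.
  intros TG HN Hseq.
  destruct (sequence_at_identity op mul inv e TG Hseq) as [y [Hy [Hye Hyinj]]].
  apply (diagonal_of_identity_G_delta op mul inv e TG).
  (* Split y into its even and odd terms, which have disjoint ranges. *)
  apply (identity_G_delta G op mul inv e TG (HN (fun x => x <> e))
           (fun n => y (2 * n)%nat) (fun n => y (2 * n + 1)%nat)).
  - apply converges_subsequence; auto; intros; lia.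
  - apply converges_subsequence; auto; intros; lia.
  - intros n; apply Hye.
  - intros n; apply Hye.
  - intros n m E. apply Hyinj in E. lia.
Qed.
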